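(* For given positive integers $N_s$ ($s\in\mathcal S$) and $N=\sum_s N_s$, let $M_s=\lfloor N/N_s\rfloor$ and $r_s=N\bmod N_s$. Consider an sAEDS with $|\mathcal X_s|=N_s$ in which, for each $s$, exactly $N_s-r_s$ states $x\in\mathcal X_s$ have $|\mathcal F^+_x|=M_s$ and the other $r_s$ have $|\mathcal F^+_x|=M_s+1$, and, for a stationary distribution $Q$ of its state chain, each $\mathcal F^+_x$ is encoded by a phased-in code (with $|\mathcal F^+_x|$ codewords) matched to $Q$ restricted to $\mathcal F^+_x$. Then $$L\le H(p)+D(p\|q)+\sigma+\sum_{s\in\mathcal S}p(s)\lg\frac{M_s+\tilde Q_{M_s+1}}{N/N_s},$$ where $\sigma=\lg\lg e+1-\lg e$ and $\tilde Q_{M_s+1}=\sum_{x\in\mathcal X_s,\ |\mathcal F^+_x|=M_s+1}\tilde Q_s(x)$.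
   Context: Let $\mathcal S$ be a finite alphabet with $|\mathcal S|\ge 2$ and $p=\{p(s)\}$ a probability distribution with $p(s)>0$ for all $s$ (i.i.d. source). $\mathcal B=\{0,1\}^*$ (including the empty word), $l(\beta)$ the word length, $\lg=\log_2$. An AEDS with finite state set $\mathcal X$, $|\mathcal X|=N$, consists of maps $E_{\hat x}:\mathcal S\to\mathcal B$ and $F^-_{\hat x}:\mathcal S\to\mathcal X$ ($\hat x\in\mathcal X$) such that for every $x\in\mathcal X$ the words $E_{\hat x}(s)$ over all pairs $(\hat x,s)$ with $F^-_{\hat x}(s)=x$ are pairwise distinct and form a prefix-free set. The state chain is the Markov chain on $\mathcal X$ moving from $\hat x$ to $F^-_{\hat x}(s)$ with probability $p(s)$; for a stationary distribution $Q$ the average code length is $L=\sum_{\hat x}\sum_s p(s)Q(\hat x)l(E_{\hat x}(s))$. A state-divided AEDS (sAEDS) is an AEDS for which the sets $\mathcal X_s=\{F^-_{\hat x}(s):\hat x\in\mathcal X\}$ are pairwise disjoint with union $\mathcal X$; $N_s=|\mathcal X_s|$, $q(s)=N_s/N$. For $x\in\mathcal X_s$, $\mathcal F^+_x=\{\hat x: F^-_{\hat x}(s)=x\}$; for each $s$ these sets partition $\mathcal X$. An sAEDS is thus specified by the partitions and, for each $x\in\mathcal X_s$, an injective prefix-free code $\hat x\mapsto E_{\hat x}(s)$ on $\mathcal F^+_x$; the state chain (hence $Q$) depends only on $p$ and the partitions. For $x\in\mathcal X_s$, $\tilde Q_s(x)=\sum_{\hat x\in\mathcal F^+_x}Q(\hat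 x)$. Phased-in code: for an integer $M\ge1$ and $k=\lceil\lg M\rceil$, a prefix-free code on an $M$-element set with $2^k-M$ codewords of length $k-1$ and $2M-2^k$ codewords of length $k$ (for $M=1$, the single empty word). It is matched to a distribution on that set if the length-$(k-1)$ codewords go to $2^k-M$ elements of largest probability. $H(p)=-\sum_s p(s)\lg p(s)$, $D(p\|q)=\sum_s p(s)\lg(p(s)/q(s))$. *)

From HB Require Import structures.
From mathcomp Require Import all_boot all_order all_algebra.
From mathcomp Require Import all_classical all_reals.
From mathcomp Require Import all_analysis.
Set Implicit Arguments. Unset Strict Implicit. Unset Printing Implicit Defensive.
Import Order.TTheory GRing.Theory Num.Theory.
Local Open Scope ring_scope.

Section AEDS.
Variables (R : realType) (S X : finType).

Definition lg (x : R) : R := ln x / ln 2.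

Definition entropy (p : S -> R) : R := - \sum_s p s * lg (p s).
Definition kldiv (p q : S -> R) : R := \sum_s p s * lg (p s / q s).
Definition sigma : R := lg (lg (expR 1)) + 1 - lg (expR 1).

(* AEDS condition: for every state x, the words E_xh(s) over all pairs
   (xh, s) with F^-_xh(s) = x are pairwise distinct and prefix-free. *)
Definition is_AEDS (E : X -> S -> seq bool) (F : X -> S -> X) : Prop :=
  forall x (a b : X * S), F a.1 a.2 = x -> F b.1 b.2 = x -> a != b ->
    E a.1 a.2 != E b.1 b.2 /\ ~~ prefix (E a.1 a.2) (E b.1 b.2).

Definition Xs (F : X -> S -> X) (s : S) : {set X} := [set F xh s | xh in X].

Definition Fplus (F : X -> S -> X) (s : S) (x : X) : {set X} :=
  [set xh | F xh s == x].

Definition is_sAEDS (E : X -> S -> seq bool) (F : X -> S -> X) : Prop :=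
  [/\ is_AEDS E F,
      (forall s t, s != t -> [disjoint Xs F s & Xs F t]) &
      \bigcup_(s : S) Xs F s = [set: X]].

(* stationary distribution of the state chain (xh -> F xh s w.p. p s) *)
Definition stationary (p : S -> R) (F : X -> S -> X) (Q : X -> R) : Prop :=
  [/\ forall x, 0 <= Q x,
      \sum_x Q x = 1 &
      forall x, Q x = \sum_(xh : X) \sum_(s : S | F xh s == x) p s * Q xh].

Definition avg_len (p : S -> R) (E : X -> S -> seq bool) (Q : X -> R) : R :=
  \sum_(xh : X) \sum_(s : S) p s * Q xh * (size (E xh s))%:R.

(* c restricted to A is a phased-in code: injective, prefix-free, with
   k = ceil(lg |A|), all lengths in {k-1, k}, exactly 2|A| - 2^k codewords
   of length k (hence 2^k - |A| of length k-1); for |A| = 1 this forces the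
   single empty word. *)
Definition phased_in_matched (Q : X -> R) (A : {set X}) (c : X -> seq bool)
  : Prop :=
  let M := #|A| in let k := up_log 2 M in
  [/\ forall y y', y \in A -> y' \in A -> y != y' ->
        c y != c y' /\ ~~ prefix (c y) (c y'),
      forall y, y \in A -> size (c y) = k \/ (size (c y)).+1 = k,
      #|[set y in A | size (c y) == k]| = (2 * M - 2 ^ k)%N &
      forall y y', y \in A -> y' \in A ->
        (size (c y)).+1 = k -> size (c y') = k -> Q y' <= Q y].

Definition Qtilde (F : X -> S -> X) (Q : X -> R) (s : S) (x : X) : R :=
  \sum_(xh in Fplus F s x) Q xh.

End AEDS.

From HB Require Import structures.
From mathcomp Require Import all_boot all_order all_algebra.
From mathcomp Require Import all_classical all_reals.
From mathcomp Require Import all_analysis.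
From mathcomp Require Import ring lra zify.
Set Implicit Arguments. Unset Strict Implicit.
Import Order.TTheory GRing.Theory Num.Theory.
Local Open Scope ring_scope.

(* Fix a symbol s.  The fibers F^+_x (x in X_s) partition the states, so the
   s-part of the average length is a Qtilde_s-weighted average of the average
   lengths of the phased-in codes on the fibers.  A phased-in code on M words
   uses lengths k - 1 and k (k = up_log 2 M), and matching forces the 2^k - M
   short words to carry at least the fraction (2^k - M) / M of the mass, so its
   average length is at most k + 1 - 2^k / M <= lg M + sigma (by ln t <= t - 1).
   As the fibers have size M_s or M_s + 1, concavity of lg bounds the average of
   lg |F^+_x| by lg (M_s + Qtilde_{M_s+1}).  Averaging over s with weights p(s)
   and using H(p) + D(p || q) = - sum_s p(s) lg q(s) with q(s) = N_s / N turns
   the result into the stated bound. *)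

Lemma expn_up_log_leq (p n : nat) : (1 < p)%N -> (0 < n)%N ->
  (p ^ up_log p n <= p * n)%N.
Proof.
move=> p1 n0; case: (ltnP 1 n) => n1.
  have k0 : (0 < up_log p n)%N by rewrite up_log_gt0 p1 n1.
  by rewrite -(prednK k0) expnS leq_mul2l ltnW ?up_log_gtn ?orbT.
have -> : n = 1%N by apply/eqP; rewrite eqn_leq n1 n0.
by rewrite up_log1 muln1 ltnW.
Qed.

Lemma card_fibers_cover (T : finType) (A : {set T}) (f : T -> nat) (m : nat) :
  (#|[set x in A | f x == m]| + #|[set x in A | f x == m.+1]|)%N = #|A| ->
  forall x, x \in A -> f x = m \/ f x = m.+1.
Proof.
set A0 := [set x in A | f x == m]; set A1 := [set x in A | f x == m.+1].
move=> cardA x xA.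
have disj : A0 :&: A1 = finset.set0.
  apply/setP => y; rewrite !inE andbACA andbb.
  by case: (f y =P m) => [->|_]; rewrite ?andbF // ltn_eqF ?andbF.
have cover : A0 :|: A1 = A.
  apply/eqP; rewrite eqEcard cardsU disj cards0 subn0 cardA leqnn andbT.
  by apply/fintype.subsetP => y; rewrite !inE -!andb_orr => /andP[].
by move: xA; rewrite -cover !inE => /orP[] /andP[_ /eqP]; [left | right].
Qed.

Section Logarithm.
Variable R : realType.

Lemma ln_le_subr1 (y : R) : 0 < y -> ln y <= y - 1.
Proof.
move=> y0; have := @le_ln1Dx R (y - 1).
by rewrite addrCA subrr addr0; apply; rewrite ltrBrDl subrr.
Qed.

Lemma ln2_gt0 : 0 < ln (2 : R).
Proof. by apply: ln_gt0; rewrite ltr1n. Qed.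

Lemma lgM (x y : R) : 0 < x -> 0 < y -> lg (x * y) = lg x + lg y.
Proof. by move=> x0 y0; rewrite /lg lnM ?posrE // mulrDl. Qed.

Lemma lgV (x : R) : 0 < x -> lg x^-1 = - lg x.
Proof. by move=> x0; rewrite /lg lnV ?posrE // mulNr. Qed.

(* With t = 2^k ln 2 / M, the bound is [ln t <= t - 1] divided by [ln 2]. *)
Lemma expn_div_lg_sigma (M : R) (k : nat) : 0 < M ->
  k%:R + 1 - 2 ^+ k / M <= lg M + sigma R.
Proof.
move=> M0; have c0 := ln2_gt0; set c := ln (2 : R) in c0 *.
have pk0 : 0 < (2 : R) ^+ k by rewrite exprn_gt0 ?ltr0n.
have t0 : 0 < 2 ^+ k / M * c by rewrite mulr_gt0 ?divr_gt0.
have := ln_le_subr1 t0.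
rewrite lnM ?posrE ?divr_gt0 // ln_div ?posrE // lnXn ?ltr0n //.
rewrite /sigma /lg expRK -/c div1r lnV ?posrE // => h.
rewrite -subr_ge0 -(pmulr_rge0 _ c0).
have -> : c * (ln M / c + (- ln c / c + 1 - c^-1) - (k%:R + 1 - 2 ^+ k / M))
  = 2 ^+ k / M * c - 1 - (c *+ k - ln M + ln c).
  by rewrite -[c *+ k]mulr_natr; field; rewrite !gt_eqF.
by rewrite subr_ge0.
Qed.

Lemma lg_mix_le (a b x y : R) : 0 <= a -> 0 <= b -> a + b = 1 ->
  0 < x -> 0 < y -> a * lg x + b * lg y <= lg (a * x + b * y).
Proof.
move=> a0 b0 ab x0 y0; set z := a * x + b * y.
have z0 : 0 < z.
  have [b_eq0|b_neq0] := eqVneq b 0.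
    have a1 : a = 1 by rewrite -ab b_eq0 addr0.
    by rewrite /z b_eq0 a1 mul0r addr0 mul1r.
  have b_gt0 : 0 < b by rewrite lt_def b_neq0.
  by apply: ltr_wpDl; [exact: mulr_ge0 a0 (ltW x0) | exact: mulr_gt0].
(* [ln t <= t - 1] at t = x / z and t = y / z; the right-hand sides average to 0. *)
have hx := ler_wpM2l a0 (ln_le_subr1 (divr_gt0 x0 z0)).
have hy := ler_wpM2l b0 (ln_le_subr1 (divr_gt0 y0 z0)).
have mix : a * (x / z - 1) + b * (y / z - 1) = 0.
  have -> : a * (x / z - 1) + b * (y / z - 1) = z / z - (a + b) by rewrite /z; ring.
  by rewrite divff ?gt_eqF // ab subrr.
rewrite /lg !mulrA -mulrDl; apply: ler_wpM2r; first by rewrite invr_ge0 ltW ?ln2_gt0.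
rewrite -subr_ge0.
have -> : ln z - (a * ln x + b * ln y) = - (a * ln (x / z) + b * ln (y / z)).
  rewrite !ln_div ?posrE //.
  by transitivity ((a + b) * ln z - (a * ln x + b * ln y)); [rewrite ab mul1r | ring].
by rewrite oppr_ge0 -mix lerD.
Qed.

End Logarithm.

Section PhasedInCode.
Variables (R : realType) (X : finType).

Lemma sum_mulrn_card_le (w : X -> R) (A B : {set X}) :
  (forall y y', y \in A -> y' \in B -> w y' <= w y) ->
  (\sum_(y in B) w y) *+ #|A| <= (\sum_(y in A) w y) *+ #|B|.
Proof.
move=> dom; rewrite -sumr_const -sumrMnl; apply: ler_sum => y yA.
by rewrite -sumr_const; apply: ler_sum => y' y'B; apply: dom.
Qed.

Lemma phased_in_matched_len_le (w : X -> R) (A : {set X}) (c : X -> seq bool) :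
  (forall y, 0 <= w y) -> (0 < #|A|)%N -> phased_in_matched w A c ->
  \sum_(y in A) w y * (size (c y))%:R <=
  (\sum_(y in A) w y) * (lg #|A|%:R + sigma R).
Proof.
move=> w0 A0 [_ len_k card_long matched].
set M := #|A| in A0 card_long *; set k := up_log 2 M in len_k card_long matched *.
set B := [set y | size (c y) == k]; set Long := A :&: B; set Short := A :\: B.
have eLong : [set y in A | size (c y) == k] = Long by apply/setP => y; rewrite !inE.
rewrite eLong in card_long.
have short_len y : y \in Short -> (size (c y)).+1 = k.
  rewrite !inE => /andP[long_y yA].
  by case: (len_k y yA) => // eq_k; rewrite eq_k eqxx in long_y.
have le_dbl : (2 ^ k <= 2 * M)%N := expn_up_log_leq (isT : (1 < 2)%N) A0.
have le_up : (M <= 2 ^ k)%N := up_logP M (isT : (1 < 2)%N).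
have card_short : #|Short| = (2 ^ k - M)%N.
  by have := cardsID B A; rewrite -/Long -/Short card_long -/M; lia.
set a := \sum_(y in Short) w y; set b := \sum_(y in Long) w y.
have ab0 : 0 <= a + b by rewrite addr_ge0 ?sumr_ge0.
have mass_A : \sum_(y in A) w y = a + b by rewrite (big_setID B) addrC.
have len_A : \sum_(y in A) w y * (size (c y))%:R = (a + b) * k%:R - a.
  rewrite (big_setID B) /= -/Long -/Short.
  rewrite (eq_bigr (fun y => w y * k%:R)); last by move=> y; rewrite !inE => /andP[_ /eqP->].
  rewrite [X in _ + X](eq_bigr (fun y => w y * k%:R - w y)); last first.
    by move=> y /short_len <-; rewrite -addn1 natrD mulrDr mulr1 addrK.
  by rewrite sumrB -!mulr_suml -/a -/b; ring.
have short_share : b * (2 ^+ k - M%:R) <= a * (2 * M%:R - 2 ^+ k).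
  have dom y y' : y \in Short -> y' \in Long -> w y' <= w y.
    move=> y_short; rewrite !inE => /andP[y'A /eqP y'_long].
    by apply: matched => //; [move: y_short; rewrite inE => /andP[] | exact: short_len].
  have := sum_mulrn_card_le dom; rewrite -/a -/b card_short card_long.
  by rewrite -[b *+ _]mulr_natr -[a *+ _]mulr_natr !natrB // natrM natrX.
have M0 : (0 : R) < M%:R by rewrite ltr0n.
rewrite len_A mass_A; apply: le_trans (ler_wpM2l ab0 (expn_div_lg_sigma k M0)).
rewrite -subr_ge0.
have -> : (a + b) * (k%:R + 1 - 2 ^+ k / M%:R) - ((a + b) * k%:R - a)
  = (a * (2 * M%:R - 2 ^+ k) - b * (2 ^+ k - M%:R)) / M%:R.
  by field; rewrite gt_eqF.
by apply: divr_ge0; rewrite ?subr_ge0 // ltW.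
Qed.

End PhasedInCode.

Section SymbolFibers.
Variables (R : realType) (S X : finType) (F : X -> S -> X) (Q : X -> R) (s : S).
Hypotheses (Q_ge0 : forall x, 0 <= Q x) (Q_sum1 : \sum_x Q x = 1).

Lemma big_Xs_Fplus (G : X -> R) :
  \sum_xh G xh = \sum_(x in Xs F s) \sum_(xh in Fplus F s x) G xh.
Proof.
rewrite (partition_big (F^~ s) (mem (Xs F s))) /=; last by move=> xh _; apply/imsetP; exists xh.
by apply: eq_bigr => x _; apply: eq_bigl => xh; rewrite !inE.
Qed.

Lemma Qtilde_ge0 x : 0 <= Qtilde F Q s x.
Proof. exact: sumr_ge0. Qed.

Lemma sum_Qtilde : \sum_(x in Xs F s) Qtilde F Q s x = 1.
Proof. by rewrite -Q_sum1 (big_Xs_Fplus Q). Qed.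

Lemma Fplus_card_gt0 x : x \in Xs F s -> (0 < #|Fplus F s x|)%N.
Proof. by case/imsetP=> xh _ ->; apply/card_gt0P; exists xh; rewrite inE. Qed.

Lemma sum_len_le_lg (E : X -> S -> seq bool) (m : nat) : (0 < m)%N ->
  (forall x, x \in Xs F s -> #|Fplus F s x| = m \/ #|Fplus F s x| = m.+1) ->
  (forall x, x \in Xs F s -> phased_in_matched Q (Fplus F s x) (E^~ s)) ->
  \sum_xh Q xh * (size (E xh s))%:R <=
    sigma R + lg (m%:R + \sum_(x in Xs F s | #|Fplus F s x| == m.+1) Qtilde F Q s x).
Proof.
move=> m0 fiber_card phased.
rewrite (big_Xs_Fplus (fun xh => Q xh * _)).
apply: le_trans (_ : \sum_(x in Xs F s) Qtilde F Q s x * (lg #|Fplus F s x|%:R + sigma R) <= _).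
  apply: ler_sum => x xX.
  exact: phased_in_matched_len_le (Fplus_card_gt0 xX) (phased x xX).
under eq_bigr do rewrite mulrDr.
rewrite big_split /= -mulr_suml sum_Qtilde mul1r addrC lerD2l.
rewrite (bigID (fun x => #|Fplus F s x| == m.+1)) /= addrC.
set q0 := \sum_(x in Xs F s | #|Fplus F s x| != m.+1) Qtilde F Q s x.
set q1 := \sum_(x in Xs F s | #|Fplus F s x| == m.+1) Qtilde F Q s x.
have q0_ge0 : 0 <= q0 by apply: sumr_ge0 => x _; apply: Qtilde_ge0.
have q1_ge0 : 0 <= q1 by apply: sumr_ge0 => x _; apply: Qtilde_ge0.
have q01 : q0 + q1 = 1.
  by rewrite addrC -sum_Qtilde [RHS](bigID (fun x => #|Fplus F s x| == m.+1)).
have -> : \sum_(x in Xs F s | #|Fplus F s x| != m.+1) Qtilde F Q s x * lg #|Fplus F s x|%:R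
    = q0 * lg m%:R.
  rewrite /q0 mulr_suml; apply: eq_bigr => x /andP[xX].
  by case: (fiber_card x xX) => ->; rewrite ?eqxx.
have -> : \sum_(x in Xs F s | #|Fplus F s x| == m.+1) Qtilde F Q s x * lg #|Fplus F s x|%:R
    = q1 * lg m.+1%:R.
  by rewrite /q1 mulr_suml; apply: eq_bigr => x /andP[_ /eqP ->].
have -> : m%:R + q1 = q0 * m%:R + q1 * m.+1%:R.
  by rewrite -natr1; transitivity ((q0 + q1) * m%:R + q1); [rewrite q01 mul1r | ring].
by apply: lg_mix_le; rewrite ?ltr0n.
Qed.

End SymbolFibers.

Section Averages.
Variables (R : realType) (S X : finType).

Lemma avg_lenE (p : S -> R) (E : X -> S -> seq bool) (Q : X -> R) :
  avg_len p E Q = \sum_s p s * \sum_xh Q xh * (size (E xh s))%:R.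
Proof.
rewrite /avg_len exchange_big; apply: eq_bigr => s _.
by rewrite mulr_sumr; apply: eq_bigr => xh _; rewrite mulrA.
Qed.

Lemma entropy_add_kldiv (p q : S -> R) :
  (forall s, 0 < p s) -> (forall s, 0 < q s) ->
  entropy p + kldiv p q = - \sum_s p s * lg (q s).
Proof.
move=> p_gt0 q_gt0; rewrite /entropy /kldiv.
rewrite [X in _ + X](eq_bigr (fun s => p s * lg (p s) - p s * lg (q s))); last first.
  by move=> s _; rewrite lgM ?invr_gt0 // lgV // mulrDr mulrN.
by rewrite sumrB; ring.
Qed.

End Averages.

Theorem theorem5 (R : realType) (S X : finType) (p : S -> R) (Ns : S -> nat)
    (E : X -> S -> seq bool) (F : X -> S -> X) (Q : X -> R) :
  (1 < #|S|)%N ->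
  (forall s, 0 < p s) -> \sum_s p s = 1 ->
  (forall s, 0 < Ns s)%N ->
  #|X| = (\sum_s Ns s)%N ->
  is_sAEDS E F ->
  (forall s, #|Xs F s| = Ns s) ->
  (forall s,
     #|[set x in Xs F s | #|Fplus F s x| == ((\sum_t Ns t) %/ Ns s)%N]|
       = (Ns s - (\sum_t Ns t) %% Ns s)%N /\
     #|[set x in Xs F s | #|Fplus F s x| == ((\sum_t Ns t) %/ Ns s).+1]|
       = ((\sum_t Ns t) %% Ns s)%N) ->
  stationary p F Q ->
  (forall s x, x \in Xs F s ->
     phased_in_matched Q (Fplus F s x) (fun y => E y s)) ->
  avg_len p E Q <=
    entropy p
    + kldiv p (fun s => (Ns s)%:R / (\sum_t Ns t)%N%:R)
    + sigma R
    + \sum_s p s * lg ((((\sum_t Ns t) %/ Ns s)%N%:R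
          + \sum_(x in Xs F s | #|Fplus F s x| == ((\sum_t Ns t) %/ Ns s).+1)
              Qtilde F Q s x)
          / ((\sum_t Ns t)%N%:R / (Ns s)%:R)).
Proof.
move=> _ p_gt0 p_sum1 Ns_gt0 _ _ card_Xs card_fibers [Q_ge0 Q_sum1 _] phased.
set N := (\sum_t Ns t)%N in card_fibers *.
set m := fun s => (N %/ Ns s)%N.
set Ma := fun s => (m s)%:R
  + \sum_(x in Xs F s | #|Fplus F s x| == (m s).+1) Qtilde F Q s x.
have Ns_le s : (Ns s <= N)%N by rewrite /N (bigD1 s) //= leq_addr.
have m_gt0 s : (0 < m s)%N by rewrite divn_gt0.
have Ma_gt0 s : 0 < Ma s.
  by rewrite ltr_wpDr ?ltr0n // sumr_ge0 // => x _; apply: Qtilde_ge0.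
have fiber_card s : forall x, x \in Xs F s ->
    #|Fplus F s x| = m s \/ #|Fplus F s x| = (m s).+1.
  apply: (card_fibers_cover (f := fun x => #|Fplus F s x|)); case: (card_fibers s) => -> ->.
  by rewrite subnK ?card_Xs // ltnW // ltn_pmod.
have q_gt0 s : (0 : R) < (Ns s)%:R / N%:R by rewrite divr_gt0 ?ltr0n // (leq_trans _ (Ns_le s)).
have sum_lg_Ma : \sum_s p s * lg (Ma s / (N%:R / (Ns s)%:R))
    = \sum_s p s * lg (Ma s) + \sum_s p s * lg ((Ns s)%:R / N%:R).
  by rewrite -big_split; apply: eq_bigr => s _ /=; rewrite invf_div lgM // mulrDr.
have sum_sigma : \sum_s p s * (sigma R + lg (Ma s)) = sigma R + \sum_s p s * lg (Ma s).
  by under eq_bigr do rewrite mulrDr; rewrite big_split /= -mulr_suml p_sum1 mul1r.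
rewrite avg_lenE entropy_add_kldiv // sum_lg_Ma.
apply: le_trans (_ : \sum_s p s * (sigma R + lg (Ma s)) <= _).
  apply: ler_sum => s _; apply: ler_wpM2l; first exact: ltW.
  exact (sum_len_le_lg Q_ge0 Q_sum1 (m_gt0 s) (fiber_card s) (phased s)).
by rewrite sum_sigma; lra.
Qed.
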